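(* Let $z_1,z_2,z_3,z_4\in\mathbb{C}$ be the vertices of a convex quadrilateral, labelled in cyclic order around its boundary, and for $j=1,\dots,4$ (indices mod $4$) let $$\alpha_j=\angle z_{j+1}z_jz_{j+2},\qquad \beta_j=\angle z_{j+2}z_jz_{j-1},\qquad \gamma_j=\angle z_{j-1}z_jz_{j+1}.$$ Then $$S_1=\sum_{j=1}^4(\cos\alpha_j+\cos\beta_j+\cos\gamma_j)\ \ge\ 4 .$$
   Context: Angles $\angle XYZ\in[0,\pi]$ denote the usual unsigned angle at $Y$ between the segments $YX$ and $YZ$. *)

From Stdlib Require Import Reals.
From Coquelicot Require Import Coquelicot.
Open Scope R_scope.

Definition cross (u v : C) : R := fst u * snd v - snd u * fst v.
Definition dot (u v : C) : R := fst u * fst v + snd u * snd v.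

Definition angle (X Y Z : C) : R :=
  acos (dot (X - Y)%C (Z - Y)%C / (Cmod (X - Y)%C * Cmod (Z - Y)%C)).

(* The four vertices, indexed cyclically (index k mod 4; index 0 = z1). *)
Definition vtx (z1 z2 z3 z4 : C) (k : nat) : C :=
  match (k mod 4)%nat with
  | 0%nat => z1 | 1%nat => z2 | 2%nat => z3 | _ => z4
  end.

(* z1 z2 z3 z4 are the vertices of a (non-degenerate) convex quadrilateral,
   listed in cyclic order along its boundary: all consecutive turns are
   strictly in the same direction (all counterclockwise or all clockwise). *)
Definition convex_quad (z1 z2 z3 z4 : C) : Prop :=
  let z := vtx z1 z2 z3 z4 in
  (forall j : nat, (j < 4)%nat ->
     0 < cross (z (S j) - z j)%C (z (S (S j)) - z (S j))%C) \/
  (forall j : nat, (j < 4)%nat ->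
     cross (z (S j) - z j)%C (z (S (S j)) - z (S j))%C < 0).

(* S_1 (with 0-based index j; j-1 is taken as j+3 mod 4). *)
Definition S1 (z1 z2 z3 z4 : C) : R :=
  let z := vtx z1 z2 z3 z4 in
  sum_f_R0 (fun j =>
      cos (angle (z (j + 1)%nat) (z j) (z (j + 2)%nat))
    + cos (angle (z (j + 2)%nat) (z j) (z (j + 3)%nat))
    + cos (angle (z (j + 3)%nat) (z j) (z (j + 1)%nat)))
    3.

(* Each of the twelve angles is an angle of one of the four triangles spanned
   by three of the vertices, so S_1 is the sum of the cosine sums of these
   four triangles.  In a triangle with sides a, b, c the law of cosines gives
   cos A + cos B + cos C = 1 + (a+b-c)(b+c-a)(c+a-b) / (2abc) (that is,
   1 + r/R), which is at least 1 by the triangle inequality.  Convexity is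
   only needed to make the four vertices pairwise distinct. *)

From Stdlib Require Import Reals Lra Lia.
From Coquelicot Require Import Coquelicot.
Open Scope R_scope.

Lemma Cmod_sqr_dot (u : C) : Cmod u * Cmod u = dot u u.
Proof. unfold Cmod, dot. rewrite sqrt_sqrt; [ring | nra]. Qed.

Lemma dot_cross_Lagrange (u v : C) :
  dot u v * dot u v + cross u v * cross u v = dot u u * dot v v.
Proof. unfold dot, cross. ring. Qed.

Lemma dot_Cauchy_Schwarz (u v : C) : Rabs (dot u v) <= Cmod u * Cmod v.
Proof.
  assert (Hsq : dot u v * dot u v <= (Cmod u * Cmod v) * (Cmod u * Cmod v)).
  { replace ((Cmod u * Cmod v) * (Cmod u * Cmod v))
      with ((Cmod u * Cmod u) * (Cmod v * Cmod v)) by ring.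
    rewrite !Cmod_sqr_dot, <- dot_cross_Lagrange.
    pose proof (Rle_0_sqr (cross u v)). unfold Rsqr in *. lra. }
  assert (Hm : 0 <= Cmod u * Cmod v) by (apply Rmult_le_pos; apply Cmod_ge_0).
  apply Rabs_le. split; nra.
Qed.

Lemma Rdiv_between_m1_1 (x m : R) : Rabs x <= m -> -1 <= x / m <= 1.
Proof.
  intro Hx.
  assert (Hm : 0 < m \/ m = 0) by (pose proof (Rabs_pos x); lra).
  destruct Hm as [Hm | Hm0].
  - apply Rabs_le_between. unfold Rdiv.
    rewrite Rabs_mult, Rabs_inv, (Rabs_pos_eq m) by lra.
    pose proof (Rinv_0_lt_compat m Hm).
    replace 1 with (m * / m) by (field; lra).
    apply Rmult_le_compat_r; lra.
  - subst m. unfold Rdiv. rewrite Rinv_0. lra.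
Qed.

Lemma cos_angle (X Y Z : C) :
  cos (angle X Y Z) = dot (X - Y)%C (Z - Y)%C / (Cmod (X - Y)%C * Cmod (Z - Y)%C).
Proof. apply cos_acos, Rdiv_between_m1_1, dot_Cauchy_Schwarz. Qed.

(* No distinctness is needed: if X = Y or Z = Y, both sides are divisions
   by 0, hence 0. *)
Lemma cos_angle_sides (X Y Z : C) :
  cos (angle X Y Z) =
  (Cmod (X - Y)%C * Cmod (X - Y)%C + Cmod (Z - Y)%C * Cmod (Z - Y)%C
   - Cmod (X - Z)%C * Cmod (X - Z)%C) / (2 * (Cmod (X - Y)%C * Cmod (Z - Y)%C)).
Proof.
  rewrite cos_angle, !Cmod_sqr_dot.
  assert (Hpolar : dot (X - Y)%C (X - Y)%C + dot (Z - Y)%C (Z - Y)%C - dot (X - Z)%C (X - Z)%C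
                   = 2 * dot (X - Y)%C (Z - Y)%C)
    by (destruct X, Y, Z; unfold dot; simpl; ring).
  rewrite Hpolar, Rdiv_mult_l_l; [reflexivity | lra].
Qed.

Lemma Cmod_sub_sym (X Y : C) : Cmod (X - Y)%C = Cmod (Y - X)%C.
Proof.
  rewrite <- Cmod_opp. f_equal.
  destruct X, Y; unfold Cminus, Cplus, Copp; simpl; f_equal; ring.
Qed.

Lemma Cmod_sub_triangle (X Y Z : C) : Cmod (X - Z)%C <= Cmod (X - Y)%C + Cmod (Y - Z)%C.
Proof.
  replace (X - Z)%C with ((X - Y) + (Y - Z))%C by
    (destruct X, Y, Z; unfold Cminus, Cplus, Copp; simpl; f_equal; ring).
  apply Cmod_triangle.
Qed.

Lemma Cmod_sub_gt_0 (X Y : C) : X <> Y -> 0 < Cmod (X - Y)%C.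
Proof.
  intro Hneq. apply Cmod_gt_0. intro H0. apply Hneq.
  replace X with ((X - Y) + Y)%C by
    (destruct X, Y; unfold Cminus, Cplus, Copp; simpl; f_equal; ring).
  rewrite H0. apply Cplus_0_l.
Qed.

Lemma cos_sum_sides_ge_1 (a b c : R) :
  0 < a -> 0 < b -> 0 < c -> a <= b + c -> b <= c + a -> c <= a + b ->
  (c * c + b * b - a * a) / (2 * (c * b)) + (c * c + a * a - b * b) / (2 * (c * a))
  + (b * b + a * a - c * c) / (2 * (b * a)) >= 1.
Proof.
  intros Ha Hb Hc Hbc Hca Hab.
  replace ((c * c + b * b - a * a) / (2 * (c * b)) + (c * c + a * a - b * b) / (2 * (c * a))
           + (b * b + a * a - c * c) / (2 * (b * a)))
    with (1 + (b + c - a) * (c + a - b) * (a + b - c) / (2 * (a * b * c)))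
    by (field; lra).
  assert (Hnum : 0 <= (b + c - a) * (c + a - b) * (a + b - c))
    by (repeat apply Rmult_le_pos; lra).
  assert (Hden : 0 < 2 * (a * b * c)) by (repeat apply Rmult_lt_0_compat; lra).
  pose proof (Rdiv_le_0_compat _ _ Hnum Hden). lra.
Qed.

Lemma triangle_cos_sum_ge_1 (P Q R : C) :
  P <> Q -> Q <> R -> P <> R ->
  cos (angle Q P R) + cos (angle P Q R) + cos (angle P R Q) >= 1.
Proof.
  intros HPQ HQR HPR.
  rewrite !cos_angle_sides.
  rewrite (Cmod_sub_sym P Q), (Cmod_sub_sym P R), (Cmod_sub_sym Q R).
  pose proof (Cmod_sub_triangle R P Q) as Ha.
  pose proof (Cmod_sub_triangle R Q P) as Hb.
  pose proof (Cmod_sub_triangle Q R P) as Hc.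
  rewrite (Cmod_sub_sym P Q) in Ha. rewrite (Cmod_sub_sym Q R) in Hc.
  apply cos_sum_sides_ge_1; try lra; apply Cmod_sub_gt_0; congruence.
Qed.

Lemma angle_sym (X Y Z : C) : angle X Y Z = angle Z Y X.
Proof.
  unfold angle. rewrite (Rmult_comm (Cmod (X - Y)%C)).
  do 2 f_equal. unfold dot. ring.
Qed.

Lemma cross_neq_0_distinct (a b c : C) :
  cross (b - a)%C (c - b)%C <> 0 -> a <> b /\ b <> c /\ a <> c.
Proof. intro H. repeat split; intro E; subst; apply H; unfold cross; simpl; ring. Qed.

Lemma convex_quad_turn_neq_0 (z1 z2 z3 z4 : C) (j : nat) :
  convex_quad z1 z2 z3 z4 -> (j < 4)%nat ->
  let z := vtx z1 z2 z3 z4 in cross (z (S j) - z j)%C (z (S (S j)) - z (S j))%C <> 0.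
Proof. intros [H | H] Hj; specialize (H j Hj); simpl in *; lra. Qed.

Theorem corollary1 (z1 z2 z3 z4 : C) :
  convex_quad z1 z2 z3 z4 -> S1 z1 z2 z3 z4 >= 4.
Proof.
  intro Hconv.
  destruct (cross_neq_0_distinct _ _ _ (convex_quad_turn_neq_0 _ _ _ _ 0 Hconv ltac:(lia)))
    as [H12 [H23 H13]].
  destruct (cross_neq_0_distinct _ _ _ (convex_quad_turn_neq_0 _ _ _ _ 1 Hconv ltac:(lia)))
    as [_ [H34 H24]].
  destruct (cross_neq_0_distinct _ _ _ (convex_quad_turn_neq_0 _ _ _ _ 2 Hconv ltac:(lia)))
    as [_ [H41 _]].
  unfold vtx in *; simpl in *.
  pose proof (triangle_cos_sum_ge_1 z1 z2 z3 H12 H23 H13) as T123.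
  pose proof (triangle_cos_sum_ge_1 z1 z3 z4 H13 H34 (not_eq_sym H41)) as T134.
  pose proof (triangle_cos_sum_ge_1 z1 z2 z4 H12 H24 (not_eq_sym H41)) as T124.
  pose proof (triangle_cos_sum_ge_1 z2 z3 z4 H23 H34 H24) as T234.
  unfold S1, vtx; simpl.
  rewrite (angle_sym z1 z3 z4), (angle_sym z1 z4 z3) in T134.
  rewrite (angle_sym z2 z1 z4), (angle_sym z1 z2 z4) in T124.
  lra.
Qed.
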